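(* Under the standing assumptions below, for every $i\in P$ the sum $\sum_{r\in P,\ r<i} b_r$ is finite, where $b_r$ is the rank of the free $R$-module $M_r/D_r$.
   Context: Standing assumptions: $R$ is a principal ideal domain; $P$ is a lattice with a compatible abelian group structure ($(P,+,0)$ abelian group, $a\le b\Rightarrow a+c\le b+c$). $U_0=\{s\in P:s\ge 0\}$, $R[U_0]$ the monoid ring (finite sums $\sum c_st^s$, $c_s\in R$), graded by $\deg(ct^s)=s$. $M=\bigoplus_{a\in P}M_a$ is a $P$-graded $R[U_0]$-module (persistence module) that is graded projective, with each $M_a$ a finitely generated $R$-module. For $r\in P$, $D_r=\sum_{q<r}t^{\,r-q}M_q\subseteq M_r$ (sum of images of the structure maps from degrees $q<r$); $M_r/D_r$ is a free $R$-module and $b_r$ denotes its rank. *)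

From HB Require Import structures.
From mathcomp Require Import all_boot all_order all_algebra.
Set Implicit Arguments. Unset Strict Implicit. Unset Printing Implicit Defensive.
Import GRing.Theory.
Local Open Scope ring_scope.

Definition is_ideal (R : comPzRingType) (I : R -> Prop) : Prop :=
  [/\ I 0, (forall x y, I x -> I y -> I (x + y)) & (forall a x, I x -> I (a * x))].

Definition PID (R : idomainType) : Prop :=
  forall I : R -> Prop, is_ideal I -> exists a : R, forall x, I x <-> exists c, x = c * a.

Definition lattice_ordered_group (P : zmodType) (le : rel P) : Prop :=
  [/\ [/\ (forall a, le a a),
      (forall a b, le a b -> le b a -> a = b) &
      (forall a b c, le a b -> le b c -> le a c)],
      (forall a b, exists j, [/\ le a j, le b j & forall c, le a c -> le b c -> le j c]),
      (forall a b, exists m, [/\ le m a, le m b & forall c, le c a -> le c b -> le c m]) &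
      (forall a b c, le a b -> le (a + c) (b + c))].

Definition plt (P : eqType) (le : rel P) (a b : P) : bool := (a != b) && le a b.

(* A P-graded R[U_0]-module M = (+)_a M_a is the same as a family of R-modules
   M_a together with the action of t^s : M_a -> M_(a+s) for s >= 0; we record
   it as the maps pm_map a b : M_a -> M_b for a <= b (multiplication by t^(b-a)). *)
Record pmod (R : pzRingType) (P : Type) (le : rel P) := PMod {
  pm_obj :> P -> lmodType R;
  pm_map : forall a b : P, le a b -> pm_obj a -> pm_obj b;
  pm_lin : forall a b (h : le a b) (k : R) (x y : pm_obj a),
      pm_map h (k *: x + y) = k *: pm_map h x + pm_map h y;
  pm_id : forall a (h : le a a) (x : pm_obj a), pm_map h x = x;
  pm_comp : forall a b c (hab : le a b) (hbc : le b c) (hac : le a c) (x : pm_obj a),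
      pm_map hbc (pm_map hab x) = pm_map hac x
}.

Definition pmod_hom (R : pzRingType) (P : Type) (le : rel P) (A B : pmod R le)
    (f : forall a, A a -> B a) : Prop :=
  (forall a (k : R) (x y : A a), f a (k *: x + y) = k *: f a x + f a y) /\
  (forall a b (h : le a b) (x : A a), f b (@pm_map _ _ _ A a b h x) = @pm_map _ _ _ B a b h (f a x)).

Definition graded_projective (R : pzRingType) (P : Type) (le : rel P) (M : pmod R le) : Prop :=
  forall (A B : pmod R le) (f : forall a, A a -> B a) (g : forall a, M a -> B a),
    pmod_hom f -> (forall a (y : B a), exists x, f a x = y) -> pmod_hom g ->
    exists h : forall a, M a -> A a,
      pmod_hom h /\ forall a (x : M a), f a (h a x) = g a x.

Definition fin_gen (R : pzRingType) (V : lmodType R) : Prop :=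
  exists (n : nat) (e : 'I_n -> V), forall v : V, exists c : 'I_n -> R,
    v = \sum_(i < n) c i *: e i.

(* membership in D_r = sum_{q<r} t^(r-q) M_q *)
Definition inD (R : pzRingType) (P : zmodType) (le : rel P) (M : pmod R le)
    (r : P) (x : M r) : Prop :=
  exists (n : nat) (q : 'I_n -> P) (hq : forall i, le (q i) r) (y : forall i, M (q i)),
    (forall i, plt le (q i) r) /\ x = \sum_(i < n) @pm_map _ _ _ M (q i) r (hq i) (y i).

(* M_r / D_r is a free R-module of rank n: there are e_1..e_n in M_r whose
   classes form a basis of M_r / D_r (written without forming the quotient). *)
Definition quot_free_rank (R : pzRingType) (P : zmodType) (le : rel P) (M : pmod R le)
    (r : P) (n : nat) : Prop :=
  exists e : 'I_n -> M r,
    (forall x : M r, exists c : 'I_n -> R, @inD _ _ _ M r (x - \sum_(i < n) c i *: e i)) /\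
    (forall c : 'I_n -> R, @inD _ _ _ M r (\sum_(i < n) c i *: e i) -> forall i, c i = 0).

From HB Require Import structures.
From mathcomp Require Import all_boot all_order all_algebra.
From mathcomp Require Import boolp finmap.

Set Implicit Arguments. Unset Strict Implicit. Unset Printing Implicit Defensive.
Import GRing.Theory.
Local Open Scope ring_scope.

(* Let A be the graded module with A_a = (+)_(q <= a) M_q, whose structure maps
   leave coordinates unchanged, and A -> M the map sending (x_q) in degree a to
   sum_q t^(a-q) x_q. It is onto, so projectivity of M gives a graded section h.
   Since M_i is finitely generated, h_i(M_i) is supported on a finite set S, and
   so is h_r(M_r) for r <= i, because h_r x and h_i (t^(i-r) x) have the same
   coordinates. If r < i, b_r <> 0 and r is not in S, any e in M_r equals
   sum_q t^(r-q) (h_r e)_q with all q < r, i.e. e is in D_r: impossible for a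
   basis element of M_r / D_r. *)

Section ProductLmodule.
Variables (R : pzRingType) (I : Type) (V : I -> lmodType R).

Record prodmod := Prodmod { prodmod_fun :> forall i, V i }.

HB.instance Definition _ := gen_eqMixin prodmod.
HB.instance Definition _ := gen_choiceMixin prodmod.

Lemma prodmodP (x y : prodmod) : (forall i, x i = y i) -> x = y.
Proof.
case: x; case: y => y x E; congr Prodmod; exact: functional_extensionality_dep.
Qed.

Let add (x y : prodmod) := Prodmod (fun i => x i + y i).
Let opp (x : prodmod) := Prodmod (fun i => - x i).
Let scale (k : R) (x : prodmod) := Prodmod (fun i => k *: x i).

Let addA : associative add.
Proof. by move=> x y z; apply: prodmodP => i; apply: addrA. Qed.
Let addC : commutative add.
Proof. by move=> x y; apply: prodmodP => i; apply: addrC. Qed.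
Let add0 : left_id (Prodmod (fun i => 0)) add.
Proof. by move=> x; apply: prodmodP => i; apply: add0r. Qed.
Let addN : left_inverse (Prodmod (fun i => 0)) opp add.
Proof. by move=> x; apply: prodmodP => i; apply: addNr. Qed.

HB.instance Definition _ := GRing.isZmodule.Build prodmod addA addC add0 addN.

Let scaleA k l (x : prodmod) : scale k (scale l x) = scale (k * l) x.
Proof. by apply: prodmodP => i; apply: scalerA. Qed.
Let scale1 : left_id 1 scale.
Proof. by move=> x; apply: prodmodP => i; apply: scale1r. Qed.
Let scaleDr : right_distributive scale +%R.
Proof. by move=> k x y; apply: prodmodP => i; apply: scalerDr. Qed.
Let scaleDl (x : prodmod) : {morph scale^~ x : k l / k + l}.
Proof. by move=> k l; apply: prodmodP => i; apply: scalerDl. Qed.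

HB.instance Definition _ :=
  GRing.Zmodule_isLmodule.Build R prodmod scaleA scale1 scaleDr scaleDl.

Lemma prodmodE (k : R) (x y : prodmod) i : (k *: x + y) i = k *: x i + y i.
Proof. by []. Qed.

End ProductLmodule.

Section PmodMaps.
Variables (R : pzRingType) (P : eqType) (le : rel P) (M : pmod R le).

HB.instance Definition _ a b (h : le a b) :=
  GRing.isLinear.Build R (M a) (M b) *:%R (pm_map h) (pm_lin h).

Definition pm_mapo a b (x : M a) : M b :=
  if le a b =P true is ReflectT h then pm_map h x else 0.

Lemma pm_mapoE a b (h : le a b) (x : M a) : pm_mapo b x = pm_map h x.
Proof. by rewrite /pm_mapo; case: eqP => [h'|//]; rewrite (bool_irrelevance h' h). Qed.

Lemma pm_mapo_out a b (x : M a) : ~~ le a b -> pm_mapo b x = 0.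
Proof. by rewrite /pm_mapo; case: eqP => // h; rewrite h. Qed.

Lemma pm_mapo_is_linear a b : linear (@pm_mapo a b).
Proof.
move=> k x y; have [h|nh] := boolP (le a b); first by rewrite !(pm_mapoE h) linearP.
by rewrite !pm_mapo_out // scaler0 addr0.
Qed.

HB.instance Definition _ a b :=
  GRing.isLinear.Build R (M a) (M b) *:%R (@pm_mapo a b) (@pm_mapo_is_linear a b).

End PmodMaps.

Section Dsum.
Variables (R : pzRingType) (P : choiceType) (le : rel P) (M : pmod R le).

Definition bounded_fsupp a (x : prodmod M) :=
  exists S : {fset P}, forall q, x q != 0 -> (q \in S) && le q a.

Definition dsum_pred a : {pred prodmod M} := fun x => `[< bounded_fsupp a x >].

Lemma dsum_pred_submod_closed a : submod_closed (dsum_pred a).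
Proof.
split=> [|k x y /asboolP[S xS] /asboolP[T yT]]; apply/asboolP.
  by exists fset0 => q; rewrite eqxx.
exists (S `|` T)%fset => q; rewrite prodmodE in_fsetU.
have [/xS/andP[-> ->] //|/negPn/eqP x0] := boolP (x q != 0).
by rewrite x0 scaler0 add0r => /yT/andP[-> ->]; rewrite orbT.
Qed.

HB.instance Definition _ a :=
  GRing.isSubmodClosed.Build R (prodmod M) (dsum_pred a) (dsum_pred_submod_closed a).

(* The degree-a part of (+)_(q <= a) M_q, as families with finite support. *)
Record dsum a := Dsum { dsum_val :> prodmod M; _ : dsum_val \in dsum_pred a }.

HB.instance Definition _ a := [isSub for @dsum_val a].
HB.instance Definition _ a := [Choice of dsum a by <:].
HB.instance Definition _ a := [SubChoice_isSubLmodule of dsum a by <:].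

Lemma dsumE a (k : R) (x y : dsum a) q : (k *: x + y) q = k *: x q + y q.
Proof. by []. Qed.

Lemma dsum_bounded a (x : dsum a) : bounded_fsupp a x.
Proof. exact/asboolP/(valP x). Qed.

Definition dsum_supp a (x : dsum a) : {fset P} :=
  [fset q in projT1 (cid (dsum_bounded x)) | x q != 0]%fset.

Lemma mem_dsum_supp a (x : dsum a) q : (q \in dsum_supp x) = (x q != 0).
Proof.
rewrite /dsum_supp; case: cid => S /= xS; rewrite !inE andb_idl //.
by move=> /xS/andP[].
Qed.

Lemma dsum_supp_le a (x : dsum a) q : q \in dsum_supp x -> le q a.
Proof.
by rewrite mem_dsum_supp; case: (dsum_bounded x) => S xS /xS/andP[].
Qed.

Definition dsum_proj a (x : dsum a) : M a :=
  \sum_(q <- dsum_supp x) pm_mapo a (x q).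

Lemma dsum_projE a (x : dsum a) (S : {fset P}) :
  (dsum_supp x `<=` S)%fset -> dsum_proj x = \sum_(q <- S) pm_mapo a (x q).
Proof.
move=> suppS; apply: big_fset_incl => // q _.
by rewrite mem_dsum_supp negbK => /eqP ->; rewrite linear0.
Qed.

Definition dsum_coord a q (x : dsum a) : M q := x q.

Lemma dsum_coord_is_linear a q : linear (@dsum_coord a q).
Proof. by []. Qed.

HB.instance Definition _ a q :=
  GRing.isLinear.Build R (dsum a) (M q) *:%R (@dsum_coord a q) (@dsum_coord_is_linear a q).

Lemma dsum_supp_span a (I : eqType) (s : seq I) (c : I -> R) (w : I -> dsum a) :
  (dsum_supp (\sum_(j <- s) c j *: w j) `<=` \bigcup_(j <- s) dsum_supp (w j))%fset.
Proof.
apply/fsubsetP => q; rewrite mem_dsum_supp; apply: contraNT => q_out.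
rewrite -/(dsum_coord q _) linear_sum big_seq big1 // => j js.
have /eqP wj0 : w j q == 0.
  rewrite -[_ == _]negbK -mem_dsum_supp; apply: contra q_out => qj.
  by apply/bigfcupP; exists j; rewrite ?js.
by rewrite linearZ /= /dsum_coord wj0 scaler0.
Qed.

Lemma dsum_proj_is_linear a : linear (@dsum_proj a).
Proof.
move=> k x y; set z := k *: x + y.
pose S := (dsum_supp x `|` dsum_supp y `|` dsum_supp z)%fset.
have sub (w : dsum a) : w \in [:: x; y; z] -> (dsum_supp w `<=` S)%fset.
  by rewrite !inE => /or3P[] /eqP ->; apply/fsubsetP => q; rewrite !inE => ->; rewrite ?orbT.
rewrite !(@dsum_projE _ _ S) ?sub ?inE ?eqxx ?orbT //.
rewrite scaler_sumr -big_split; apply: eq_bigr => q _.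
by rewrite dsumE linearP.
Qed.

Hypotheses (le_refl : reflexive le) (le_trans : transitive le).

Lemma dsum_map_subproof a b (h : le a b) (x : dsum a) : dsum_val x \in dsum_pred b.
Proof.
apply/asboolP; case: (dsum_bounded x) => S xS; exists S => q /xS/andP[-> /= qa].
exact: le_trans qa h.
Qed.

Definition dsum_map a b (h : le a b) (x : dsum a) : dsum b :=
  Dsum (dsum_map_subproof h x).

Lemma dsum_supp_map a b (h : le a b) (x : dsum a) : dsum_supp (dsum_map h x) = dsum_supp x.
Proof. by apply/fsetP => q; rewrite !mem_dsum_supp. Qed.

Lemma dsum_map_is_linear a b (h : le a b) : linear (dsum_map h).
Proof. by move=> k x y; apply: val_inj. Qed.

Lemma dsum_map_id a (h : le a a) (x : dsum a) : dsum_map h x = x.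
Proof. exact: val_inj. Qed.

Lemma dsum_map_comp a b c (hab : le a b) (hbc : le b c) (hac : le a c) (x : dsum a) :
  dsum_map hbc (dsum_map hab x) = dsum_map hac x.
Proof. exact: val_inj. Qed.

Definition dsum_pmod : pmod R le :=
  PMod dsum_map_is_linear dsum_map_id dsum_map_comp.

Lemma dsum_proj_hom : pmod_hom (B := M) (dsum_proj : forall a, dsum_pmod a -> M a).
Proof.
split=> [a|a b h x]; first exact: dsum_proj_is_linear.
rewrite /= (@dsum_projE _ _ (dsum_supp x)); last first.
  by apply/fsubsetP => q; rewrite !mem_dsum_supp.
rewrite /dsum_proj linear_sum; apply: eq_big_seq => q /dsum_supp_le qa.
by rewrite (pm_mapoE qa) (pm_mapoE (le_trans qa h)); apply/esym/pm_comp.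
Qed.

Lemma dsum_proj_surj a (y : M a) : exists x : dsum a, dsum_proj x = y.
Proof.
pose v := Prodmod (fun q => if q == a then pm_mapo q y else 0).
have vP : v \in dsum_pred a.
  apply/asboolP; exists [fset a]%fset => q; rewrite /v /= inE.
  by case: (q =P a) => [->|_]; rewrite ?le_refl // eqxx.
exists (Dsum vP); rewrite (@dsum_projE _ _ [fset a]%fset).
  by rewrite big_seq_fset1 /= eqxx !(pm_mapoE (le_refl a)) !pm_id.
by apply/fsubsetP => q; rewrite mem_dsum_supp inE /=; case: (q =P a); rewrite ?eqxx.
Qed.

Lemma graded_projective_section : graded_projective M ->
  exists h : forall a, M a -> dsum a,
    pmod_hom (B := dsum_pmod) h /\ forall a x, dsum_proj (h a x) = x.
Proof.
move=> Mproj; have [] := Mproj dsum_pmod M (@dsum_proj) (fun a x => x).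
- exact: dsum_proj_hom.
- exact: dsum_proj_surj.
- by [].
by move=> h [h_hom h_sect]; exists h.
Qed.

End Dsum.

Section SectionSupport.
Variables (R : pzRingType) (P : choiceType) (le : rel P) (M : pmod R le).
Hypothesis le_trans : transitive le.
Variable h : forall a, M a -> dsum M a.
Arguments h : clear implicits.
Hypotheses (h_lin : forall q : P, linear (h q))
  (h_map : forall a b (lab : le a b) x, h b (pm_map lab x) = dsum_map le_trans lab (h a x)).

HB.instance Definition _ a := GRing.isLinear.Build R (M a) (dsum M a) *:%R (h a) (@h_lin a).

Lemma section_supp_bounded i : fin_gen (M i) ->
  exists S : {fset P}, forall r (lri : le r i) (x : M r), (dsum_supp (h r x) `<=` S)%fset.
Proof.
move=> [n [v Mv]]; exists (\bigcup_(j <- index_enum 'I_n) dsum_supp (h i (v j)))%fset.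
move=> r lri x; rewrite -(dsum_supp_map le_trans lri) -h_map.
have [c ->] := Mv (pm_map lri x); rewrite linear_sum.
rewrite (eq_bigr (fun j => c j *: h i (v j))) => [|j _]; last exact: linearZ.
exact: dsum_supp_span.
Qed.

End SectionSupport.

Section InD.
Variables (R : pzRingType) (P : zmodType) (le : rel P) (M : pmod R le).

Lemma inD_sum_below r (s : seq P) (y : forall q, M q) :
  (forall q, q \in s -> plt le q r) -> inD (\sum_(q <- s) pm_mapo r (y q)).
Proof.
move=> s_lt; have s_le (k : 'I_(size s)) : le (nth r s k) r.
  by case/andP: (s_lt _ (mem_nth r (ltn_ord k))).
exists (size s), (fun k => nth r s k), s_le, (fun k => y (nth r s k)); split.
  by move=> k; apply: s_lt; apply: mem_nth.
by rewrite (big_nth r) big_mkord; apply: eq_bigr => k _; apply: pm_mapoE.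
Qed.

Lemma dsum_proj_inD r (x : dsum M r) : x r = 0 -> inD (dsum_proj x).
Proof.
move=> xr0; apply: inD_sum_below => q q_supp; rewrite /plt (dsum_supp_le q_supp) andbT.
by apply: contraTneq q_supp => ->; rewrite mem_dsum_supp xr0 eqxx.
Qed.

End InD.

Lemma quot_free_rank_notinD (R : nzRingType) (P : zmodType) (le : rel P) (M : pmod R le) r n :
  quot_free_rank M r n -> (n != 0)%N -> exists e : M r, ~ inD e.
Proof.
move=> [e [_ e_free]]; rewrite -lt0n => n_gt0; pose k := Ordinal n_gt0; exists (e k) => ekD.
have ekE : \sum_(j < n) (j == k)%:R *: e j = e k.
  rewrite (bigD1 k) //= big1 => [|j /negbTE ->]; last by rewrite scale0r.
  by rewrite scale1r addr0.
by move: (e_free _ (eq_ind_r _ ekD ekE) k); rewrite eqxx; apply/eqP; apply: oner_neq0.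
Qed.

Theorem theorem3p18 (R : idomainType) (P : zmodType) (le : rel P)
    (M : pmod R le) (b : P -> nat) :
  PID R ->
  lattice_ordered_group le ->
  graded_projective M ->
  (forall a : P, fin_gen (M a)) ->
  (forall r : P, quot_free_rank M r (b r)) ->
  forall i : P, exists s : seq P,
    forall r : P, plt le r i -> (b r != 0)%N -> r \in s.
Proof.
move=> _ [[le_refl _ le_trans3] _ _ _] M_proj M_fg M_free i.
have le_trans : transitive le by move=> q p r; apply: le_trans3.
have [h [[h_lin h_map] h_sect]] := graded_projective_section le_refl le_trans M_proj.
have [S S_supp] := section_supp_bounded h_lin h_map (M_fg i).
exists S => r /andP[_ lri] br_neq0.
have [e e_notD] := quot_free_rank_notinD (M_free r) br_neq0.
apply/negPn/negP => r_notin_S; apply: e_notD.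
rewrite -[e]h_sect; apply: dsum_proj_inD; apply/eqP.
rewrite -[_ == _]negbK -mem_dsum_supp; apply: contra r_notin_S.
exact: fsubsetP (S_supp r lri e) r.
Qed.
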